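(* For every $\varepsilon>0$ and $\eta>0$ there exists $\delta>0$ such that \[ \sup_{n\ge1}\Pr\Bigl[\sup_{0\le t\le\delta}\bigl|n^{-1/2}\Delta_{\lfloor 2nt\rfloor}\bigr|>\varepsilon\ \Big|\ BINGO(n,n)\Bigr]\le\eta. \]
   Context: Fix $\alpha>1$. Let $(X_k,Y_k)_{k\ge2}$ be the Markov chain on $\mathbb N\times\mathbb N$ with $(X_2,Y_2)=(1,1)$ and, from state $(i,j)$, moving to $(i+1,j)$ with probability $i^\alpha/(i^\alpha+j^\alpha)$ and to $(i,j+1)$ with probability $j^\alpha/(i^\alpha+j^\alpha)$ (so $X_k+Y_k=k$). $BINGO(n,n)$ is the event $(X_{2n},Y_{2n})=(n,n)$. Set $\Delta_k=X_k-Y_k$ for $k\ge2$ and $\Delta_0=\Delta_1=0$. *)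

From Stdlib Require Import Reals Lra Lia ZArith List ClassicalEpsilon.
Import ListNotations.
Open Scope R_scope.

(* A trajectory of the chain from time 2 to time 2+m is a list of m booleans:
   true = X increments, false = Y increments. *)

Definition step_prob (a : R) (i j : nat) (b : bool) : R :=
  (if b then Rpower (INR i) a else Rpower (INR j) a)
  / (Rpower (INR i) a + Rpower (INR j) a).

Fixpoint path_prob (a : R) (i j : nat) (p : list bool) : R :=
  match p with
  | nil => 1
  | b :: q => step_prob a i j b *
              path_prob a (if b then S i else i) (if b then j else S j) q
  end.

(* probability of the trajectory p started at (X_2,Y_2) = (1,1) *)
Definition weight (a : R) (p : list bool) : R := path_prob a 1 1 p.

Fixpoint all_paths (m : nat) : list (list bool) :=
  match m with
  | O => [nil]
  | S m' => map (cons true) (all_paths m') ++ map (cons false) (all_paths m')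
  end.

Definition count_b (b : bool) (s : list bool) : nat :=
  count_occ Bool.bool_dec s b.

(* Delta_k = X_k - Y_k for k >= 2 (after k-2 steps), and Delta_0 = Delta_1 = 0 *)
Definition DeltaXY (p : list bool) (k : nat) : Z :=
  (Z.of_nat (count_b true (firstn (k - 2) p))
   - Z.of_nat (count_b false (firstn (k - 2) p)))%Z.

(* BINGO(n,n): (X_{2n},Y_{2n}) = (n,n), for a trajectory of 2n-2 steps *)
Definition bingo (n : nat) (p : list bool) : Prop :=
  count_b true p = (n - 1)%nat.

Definition probE (a : R) (n : nat) (E : list bool -> Prop) : R :=
  fold_right Rplus 0
    (map (fun p => if excluded_middle_informative (E p) then weight a p else 0)
         (all_paths (2 * n - 2))).

(* conditional probability P[E | BINGO(n,n)], E depending on times <= 2n *)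
Definition condPr (a : R) (n : nat) (E : list bool -> Prop) : R :=
  probE a n (fun p => bingo n p /\ E p) / probE a n (bingo n).

(* Conditioned on BINGO(n,n), the chain is pulled towards the diagonal: from a
   state where X leads, the conditional mean of the next increment of X - Y is
   <= 0. To see this, reflect the path up to its next tie. The reflected segment
   takes as many X-steps as Y-steps, so the numerators i^a, j^a in its
   probability are unchanged, while by convexity of x ^ a every denominator
   i^a + j^a can only decrease when the walk is moved towards the diagonal.
   Hence the displacement S_r, stopped when |S_r| first reaches the least
   integer T > eps sqrt n, satisfies E[S_{r+1}^2 | BINGO] <= E[S_r^2 | BINGO] + 1,
   and Chebyshev gives P[max_{k <= r} |Delta_k| >= T | BINGO] <= r / T^2, which
   for r = 2 n delta is at most 2 delta / eps^2. *)

From Stdlib Require Import Reals ZArith Lra Lia List Permutation ClassicalEpsilon.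
Import ListNotations.
Open Scope R_scope.

Definition lsum (l : list (list bool)) (f : list bool -> R) : R :=
  fold_right Rplus 0 (map f l).

Section ListSums.

Implicit Types (l : list (list bool)) (f g : list bool -> R).

Lemma lsum_cons x l f : lsum (x :: l) f = f x + lsum l f.
Proof. reflexivity. Qed.

Lemma lsum_app l1 l2 f : lsum (l1 ++ l2) f = lsum l1 f + lsum l2 f.
Proof. unfold lsum. induction l1 as [|x l1 IH]; cbn; [lra|]. rewrite IH; lra. Qed.

Lemma lsum_map (h : list bool -> list bool) l f : lsum (map h l) f = lsum l (fun x => f (h x)).
Proof. unfold lsum; now rewrite map_map. Qed.

Lemma lsum_plus l f g : lsum l (fun x => f x + g x) = lsum l f + lsum l g.
Proof. unfold lsum. induction l as [|x l IH]; cbn; [lra|]. rewrite IH; lra. Qed.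

Lemma lsum_scal l c f : lsum l (fun x => c * f x) = c * lsum l f.
Proof. unfold lsum. induction l as [|x l IH]; cbn; [lra|]. rewrite IH; lra. Qed.

Lemma lsum_le l f g : (forall x, In x l -> f x <= g x) -> lsum l f <= lsum l g.
Proof.
  unfold lsum. induction l as [|x l IH]; intros Hfg; cbn; [lra|].
  apply Rplus_le_compat; [apply Hfg; left; auto | apply IH; intros; apply Hfg; right; auto].
Qed.

Lemma lsum_ext l f g : (forall x, In x l -> f x = g x) -> lsum l f = lsum l g.
Proof. intros Hfg; apply Rle_antisym; apply lsum_le; intros x Hx; rewrite Hfg; auto; lra. Qed.

Lemma lsum_eq0 l f : (forall x, In x l -> f x = 0) -> lsum l f = 0.
Proof. intros Hf; rewrite (lsum_ext l f (fun x => 0 * f x)) by (intros x Hx; rewrite Hf; auto; lra).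
  rewrite lsum_scal; lra. Qed.

Lemma lsum_nonpos l f : (forall x, In x l -> f x <= 0) -> lsum l f <= 0.
Proof. intros Hf. rewrite <- (lsum_eq0 l (fun _ => 0)) by auto. now apply lsum_le. Qed.

Lemma lsum_nonneg l f : (forall x, In x l -> 0 <= f x) -> 0 <= lsum l f.
Proof. intros Hf. rewrite <- (lsum_eq0 l (fun _ => 0)) by auto. now apply lsum_le. Qed.

Lemma lsum_elt_le l f x : (forall y, In y l -> 0 <= f y) -> In x l -> f x <= lsum l f.
Proof.
  induction l as [|y l IH]; intros Hf Hx; [destruct Hx|]. rewrite lsum_cons.
  destruct Hx as [<-|Hx].
  - assert (0 <= lsum l f) by (apply lsum_nonneg; intros; apply Hf; right; auto). lra.
  - assert (0 <= f y) by (apply Hf; left; auto).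
    assert (f x <= lsum l f) by (apply IH; auto; intros; apply Hf; right; auto). lra.
Qed.

Lemma lsum_perm l1 l2 f : Permutation l1 l2 -> lsum l1 f = lsum l2 f.
Proof. induction 1; unfold lsum in *; cbn; lra. Qed.

End ListSums.

Lemma lsum_all_paths_S m f : lsum (all_paths (S m)) f =
  lsum (all_paths m) (fun t => f (true :: t)) + lsum (all_paths m) (fun t => f (false :: t)).
Proof. cbn [all_paths]. now rewrite lsum_app, !lsum_map. Qed.

Lemma lsum_all_paths_add r m f : lsum (all_paths (r + m)) f =
  lsum (all_paths r) (fun q => lsum (all_paths m) (fun u => f (q ++ u))).
Proof.
  revert f; induction r as [|r IH]; intros f.
  - cbn. now rewrite Rplus_0_r.
  - cbn [Nat.add]. now rewrite !lsum_all_paths_S, !IH.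
Qed.

Lemma In_all_paths m x : In x (all_paths m) <-> length x = m.
Proof.
  revert x; induction m as [|m IH]; intros x; cbn.
  - split; [intros [<-|[]]; auto | destruct x; cbn; try discriminate; auto].
  - rewrite in_app_iff, !in_map_iff. split.
    + intros [[y [<- Hy]]|[y [<- Hy]]]; cbn; f_equal; apply IH; auto.
    + destruct x as [|b y]; cbn; intros H; [discriminate|]. injection H as H.
      destruct b; [left|right]; exists y; split; auto; apply IH; auto.
Qed.

Lemma NoDup_all_paths m : NoDup (all_paths m).
Proof.
  induction m as [|m IH]; cbn; [repeat constructor; auto|].
  apply NoDup_app; try (apply FinFun.Injective_map_NoDup; auto; intros x y H; now injection H).
  intros x Hx Hx'. apply in_map_iff in Hx, Hx'.
  destruct Hx as [y [<- _]], Hx' as [z [H _]]; discriminate.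
Qed.

Lemma lsum_all_paths_invol m (phi : list bool -> list bool) f :
  (forall x, phi (phi x) = x) -> (forall x, length (phi x) = length x) ->
  lsum (all_paths m) f = lsum (all_paths m) (fun x => f (phi x)).
Proof.
  intros Hinv Hlen. rewrite <- (lsum_map phi). apply lsum_perm, Permutation_sym, NoDup_Permutation.
  - apply FinFun.Injective_map_NoDup; [|apply NoDup_all_paths].
    intros x y H. now rewrite <- (Hinv x), <- (Hinv y), H.
  - apply NoDup_all_paths.
  - intros x. rewrite in_map_iff, In_all_paths. split.
    + intros [y [<- Hy]]. rewrite Hlen. now apply In_all_paths.
    + intros H. exists (phi x). rewrite Hinv. split; auto. apply In_all_paths. now rewrite Hlen.
Qed.

Lemma lsum_all_paths_negb m f :
  lsum (all_paths m) f = lsum (all_paths m) (fun x => f (map negb x)).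
Proof.
  apply lsum_all_paths_invol; [|apply length_map].
  intros x. rewrite map_map, (map_ext _ (fun b => b)) by (intros []; auto). apply map_id.
Qed.

(* Convexity of [x ^ a], via the mean value theorem on [L, u] and [v, H]. *)
Lemma Rpower_add_le_spread_ordered a L u v H : 1 <= a -> 0 < L ->
  L <= u -> u <= v -> v <= H -> u + v = L + H ->
  Rpower u a + Rpower v a <= Rpower L a + Rpower H a.
Proof.
  intros Ha HL HLu Huv HvH Hsum.
  destruct (Req_dec u L) as [->|HuL]; [replace v with H by lra; lra|].
  set (d := fun x => a * Rpower x (a - 1)).
  assert (Hd : forall x, 0 < x -> derivable_pt_lim (fun y => Rpower y a) x (d x))
    by (intros; now apply derivable_pt_lim_power).
  destruct (MVT_cor2 (fun y => Rpower y a) d L u) as [c1 [E1 I1]]; [lra|intros; apply Hd; lra|].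
  destruct (MVT_cor2 (fun y => Rpower y a) d v H) as [c2 [E2 I2]]; [lra|intros; apply Hd; lra|].
  assert (d c1 <= d c2) by (apply Rmult_le_compat_l; [lra|apply Rle_Rpower_l; lra]).
  assert (d c1 * (u - L) <= d c2 * (H - v)) by (replace (H - v) with (u - L) by lra; nra).
  lra.
Qed.

Lemma Rpower_add_le_spread a L u v H : 1 <= a -> 0 < L ->
  L <= u <= H -> L <= v <= H -> u + v = L + H ->
  Rpower u a + Rpower v a <= Rpower L a + Rpower H a.
Proof.
  intros Ha HL Hu Hv Hsum. destruct (Rle_dec u v).
  - apply Rpower_add_le_spread_ordered; lra.
  - rewrite Rplus_comm. apply Rpower_add_le_spread_ordered; lra.
Qed.

Lemma count_true_cons b q : count_b true (b :: q) = ((if b then 1 else 0) + count_b true q)%nat.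
Proof. now destruct b. Qed.

Lemma count_false_cons b q : count_b false (b :: q) = ((if b then 0 else 1) + count_b false q)%nat.
Proof. now destruct b. Qed.

Lemma count_b_app b q u : count_b b (q ++ u) = (count_b b q + count_b b u)%nat.
Proof. apply count_occ_app. Qed.

Lemma count_true_add_false q : (count_b true q + count_b false q)%nat = length q.
Proof.
  induction q as [|b q IH]; [reflexivity|].
  rewrite count_true_cons, count_false_cons; destruct b; cbn; lia.
Qed.

Lemma count_true_negb q : count_b true (map negb q) = count_b false q.
Proof. induction q as [|[] q IH]; cbn [map negb]; rewrite ?count_true_cons, ?count_false_cons; [reflexivity|lia|lia]. Qed.

Lemma count_false_negb q : count_b false (map negb q) = count_b true q.
Proof. induction q as [|[] q IH]; cbn [map negb]; rewrite ?count_true_cons, ?count_false_cons; [reflexivity|lia|lia]. Qed.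

Definition step_sign (b : bool) : Z := if b then 1%Z else (-1)%Z.

Definition displacement (q : list bool) : Z :=
  (Z.of_nat (count_b true q) - Z.of_nat (count_b false q))%Z.

Lemma step_sign_negb b : step_sign (negb b) = (- step_sign b)%Z.
Proof. now destruct b. Qed.

Lemma displacement_nil : displacement [] = 0%Z.
Proof. reflexivity. Qed.

Lemma displacement_cons b q : displacement (b :: q) = (step_sign b + displacement q)%Z.
Proof. unfold displacement. rewrite count_true_cons, count_false_cons. destruct b; unfold step_sign; lia. Qed.

Section PathProbability.

Variable a : R.

Lemma Rpower_sum_pos i j : 0 < Rpower (INR i) a + Rpower (INR j) a.
Proof. unfold Rpower. pose proof (exp_pos (a * ln (INR i))); pose proof (exp_pos (a * ln (INR j))); lra. Qed.

Lemma step_prob_pos i j b : 0 < step_prob a i j b.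
Proof.
  unfold step_prob. apply Rdiv_lt_0_compat; [|apply Rpower_sum_pos].
  destruct b; unfold Rpower; apply exp_pos.
Qed.

Lemma path_prob_pos p : forall i j, 0 < path_prob a i j p.
Proof. induction p; intros; cbn; [lra|]. apply Rmult_lt_0_compat; auto using step_prob_pos. Qed.

Lemma path_prob_app q u : forall i j, path_prob a i j (q ++ u) =
  path_prob a i j q * path_prob a (i + count_b true q) (j + count_b false q) u.
Proof.
  induction q as [|b q IH]; intros i j.
  - cbn. rewrite !Nat.add_0_r. ring.
  - rewrite count_true_cons, count_false_cons. cbn [app path_prob]. rewrite IH.
    destruct b; cbn [Nat.add]; rewrite ?Nat.add_succ_r, ?Nat.add_0_r; ring.
Qed.

Lemma path_prob_negb p : forall i j, path_prob a i j (map negb p) = path_prob a j i p.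
Proof.
  induction p as [|b p IH]; intros; cbn; auto. rewrite IH.
  unfold step_prob. destruct b; cbn; now rewrite Rplus_comm.
Qed.

(* A path's probability splits as (product of the numerators of the X-steps)
   * (same for the Y-steps) * (product of the inverse denominators); the first
   two factors only depend on how many steps of each kind are taken. *)
Fixpoint rising_pow (x k : nat) : R :=
  match k with O => 1 | S k => Rpower (INR x) a * rising_pow (S x) k end.

Fixpoint inv_denoms (i j : nat) (p : list bool) : R :=
  match p with
  | nil => 1
  | b :: q => / (Rpower (INR i) a + Rpower (INR j) a) *
              inv_denoms (if b then S i else i) (if b then j else S j) q
  end.

Lemma inv_denoms_pos p : forall i j, 0 < inv_denoms i j p.
Proof.
  induction p; intros; cbn; [lra|].
  apply Rmult_lt_0_compat; auto. apply Rinv_0_lt_compat, Rpower_sum_pos.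
Qed.

Lemma path_prob_factor p : forall i j, path_prob a i j p =
  rising_pow i (count_b true p) * rising_pow j (count_b false p) * inv_denoms i j p.
Proof.
  induction p as [|b p IH]; intros; [cbn; ring|].
  cbn [path_prob]. rewrite IH, count_true_cons, count_false_cons.
  pose proof (Rpower_sum_pos i j). unfold step_prob. destruct b; cbn; field; lra.
Qed.

End PathProbability.

Fixpoint stays_nonneg (c : Z) (q : list bool) : Prop :=
  match q with nil => True | b :: t => (0 <= c)%Z /\ stays_nonneg (c + step_sign b) t end.

Fixpoint first_tie (c : Z) (u : list bool) : option nat :=
  match u with
  | nil => None
  | b :: t => if Z.eqb (c + step_sign b) 0 then Some 1%nat
              else option_map S (first_tie (c + step_sign b) t)
  end.

Definition tie_reflect (u : list bool) : list bool :=
  match first_tie 0 u with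
  | Some k => map negb (firstn k u) ++ skipn k u
  | None => u
  end.

Lemma first_tie_bounds u : forall c k, first_tie c u = Some k -> (1 <= k <= length u)%nat.
Proof.
  induction u as [|b t IH]; intros c k H; cbn in H; [discriminate|].
  destruct (Z.eqb_spec (c + step_sign b) 0); [injection H as <-; cbn; lia|].
  destruct (first_tie (c + step_sign b) t) eqn:E; cbn in H; [|discriminate].
  injection H as <-. apply IH in E. cbn; lia.
Qed.

Lemma first_tie_displacement u : forall c k, first_tie c u = Some k ->
  (c + displacement (firstn k u) = 0)%Z.
Proof.
  induction u as [|b t IH]; intros c k H; cbn in H; [discriminate|].
  destruct (Z.eqb_spec (c + step_sign b) 0).
  - injection H as <-. cbn. rewrite displacement_cons, displacement_nil. lia.
  - destruct (first_tie (c + step_sign b) t) eqn:E; cbn in H; [|discriminate].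
    injection H as <-. apply IH in E. cbn [firstn]. rewrite displacement_cons. lia.
Qed.

Lemma first_tie_negb u : forall c k, first_tie c u = Some k ->
  forall rest, first_tie (- c) (map negb (firstn k u) ++ rest) = Some k.
Proof.
  induction u as [|b t IH]; intros c k H rest; cbn in H; [discriminate|].
  destruct (Z.eqb_spec (c + step_sign b) 0) as [Hc|Hc].
  - injection H as <-. cbn. rewrite step_sign_negb.
    replace (- c + - step_sign b)%Z with (- (c + step_sign b))%Z by lia. now rewrite Hc.
  - destruct (first_tie (c + step_sign b) t) eqn:E; cbn in H; [|discriminate].
    injection H as <-. cbn. rewrite step_sign_negb.
    replace (- c + - step_sign b)%Z with (- (c + step_sign b))%Z by lia.
    destruct (Z.eqb_spec (- (c + step_sign b)) 0); [lia|]. now rewrite (IH _ _ E).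
Qed.

Lemma first_tie_stays_nonneg u : forall c k, (0 < c)%Z -> first_tie c u = Some k ->
  stays_nonneg c (firstn k u).
Proof.
  induction u as [|b t IH]; intros c k Hc H; cbn in H; [discriminate|].
  destruct (Z.eqb_spec (c + step_sign b) 0); [injection H as <-; cbn; split; auto; lia|].
  destruct (first_tie (c + step_sign b) t) eqn:E; cbn in H; [|discriminate].
  injection H as <-. cbn. split; [lia|]. apply IH; auto. destruct b; unfold step_sign in *; lia.
Qed.

Lemma first_tie_exists t : forall c, (0 < c)%Z -> (c + displacement t <= 0)%Z ->
  exists k, first_tie c t = Some k.
Proof.
  induction t as [|b t IH]; intros c Hc H; [rewrite displacement_nil in H; lia|].
  cbn. destruct (Z.eqb_spec (c + step_sign b) 0); [eauto|].
  rewrite displacement_cons in H.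
  destruct (IH (c + step_sign b)%Z) as [k Hk]; [destruct b; unfold step_sign in *; lia | lia |].
  rewrite Hk; cbn; eauto.
Qed.

Lemma tie_reflect_invol u : tie_reflect (tie_reflect u) = u.
Proof.
  unfold tie_reflect at 2. destruct (first_tie 0 u) as [k|] eqn:E; [|unfold tie_reflect; now rewrite E].
  pose proof (first_tie_negb _ _ _ E (skipn k u)) as F. cbn in F.
  unfold tie_reflect. rewrite F.
  pose proof (first_tie_bounds _ _ _ E).
  assert (Hk : length (map negb (firstn k u)) = k) by (rewrite length_map, length_firstn; lia).
  rewrite firstn_app, skipn_app, Hk, Nat.sub_diag, (firstn_all2 (map negb _)),
    (skipn_all2 (map negb _)) by lia. cbn.
  rewrite app_nil_r, map_map, (map_ext _ (fun b => b)) by (intros []; auto).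
  rewrite map_id. apply firstn_skipn.
Qed.

Lemma length_tie_reflect u : length (tie_reflect u) = length u.
Proof.
  unfold tie_reflect. destruct (first_tie 0 u); auto.
  now rewrite length_app, length_map, <- length_app, firstn_skipn.
Qed.

Lemma count_true_tie_reflect u : count_b true (tie_reflect u) = count_b true u.
Proof.
  unfold tie_reflect. destruct (first_tie 0 u) as [k|] eqn:E; auto.
  pose proof (first_tie_displacement _ _ _ E) as Hd. unfold displacement in Hd.
  rewrite <- (firstn_skipn k u) at 3. rewrite !count_b_app, count_true_negb. lia.
Qed.

Definition first_sign (u : list bool) : R :=
  match u with nil => 0 | b :: _ => IZR (step_sign b) end.

Lemma first_sign_tie_reflect u k : first_tie 0 u = Some k -> first_sign (tie_reflect u) = - first_sign u.
Proof.
  intros E. pose proof (first_tie_bounds _ _ _ E). unfold tie_reflect. rewrite E.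
  destruct u as [|b t]; cbn in *; [lia|].
  destruct k; [lia|]. cbn. now rewrite step_sign_negb, opp_IZR.
Qed.

Section Reflection.

Variable a : R.
Hypothesis a_ge1 : 1 <= a.

(* Convexity: for x >= y the pair (i+x, j+y) is more spread out than (i+y, j+x). *)
Lemma inv_denoms_reflect_le i j q : (j <= i)%nat -> (1 <= j)%nat -> forall x y,
  stays_nonneg (Z.of_nat x - Z.of_nat y) q ->
  inv_denoms a (i + x) (j + y) q <= inv_denoms a (i + y) (j + x) (map negb q).
Proof.
  intros Hij Hj. induction q as [|b q IH]; intros x y Hq; cbn; [lra|].
  destruct Hq as [Hxy Hq].
  apply Rmult_le_compat; [apply Rlt_le, Rinv_0_lt_compat, Rpower_sum_pos
                         |apply Rlt_le, inv_denoms_pos| |].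
  - apply Rinv_le_contravar; [apply Rpower_sum_pos|].
    rewrite (Rplus_comm (Rpower (INR (i + x)) a)).
    assert (Hyx : (y <= x)%nat) by lia. apply le_INR in Hij, Hj, Hyx. cbn in Hj.
    pose proof (pos_INR x); pose proof (pos_INR y).
    apply Rpower_add_le_spread; rewrite ?plus_INR; lra.
  - destruct b; cbn [negb].
    + replace (S (i + x)) with (i + S x)%nat by lia. replace (S (j + x)) with (j + S x)%nat by lia.
      apply IH. replace (Z.of_nat (S x) - Z.of_nat y)%Z
        with (Z.of_nat x - Z.of_nat y + step_sign true)%Z by (unfold step_sign; lia). auto.
    + replace (S (j + y)) with (j + S y)%nat by lia. replace (S (i + y)) with (i + S y)%nat by lia.
      apply IH. replace (Z.of_nat x - Z.of_nat (S y))%Z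
        with (Z.of_nat x - Z.of_nat y + step_sign false)%Z by (unfold step_sign; lia). auto.
Qed.

(* The reflected segment is balanced, so only the denominators differ. *)
Lemma path_prob_le_tie_reflect i j t k : (j <= i)%nat -> (1 <= j)%nat ->
  first_tie 0 (true :: t) = Some k ->
  path_prob a i j (true :: t) <= path_prob a i j (tie_reflect (true :: t)).
Proof.
  intros Hij Hj E. unfold tie_reflect. rewrite E. set (u := true :: t) in *.
  pose proof (first_tie_displacement _ _ _ E) as Hd. set (q := firstn k u) in *.
  rewrite <- (firstn_skipn k u) at 1. fold q.
  rewrite !path_prob_app, count_true_negb, count_false_negb.
  unfold displacement in Hd. assert (Hbal : count_b true q = count_b false q) by lia.
  rewrite Hbal. apply Rmult_le_compat_r; [apply Rlt_le, path_prob_pos|].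
  rewrite !path_prob_factor, count_true_negb, count_false_negb, Hbal.
  apply Rmult_le_compat_l.
  { pose proof (path_prob_factor a q i j). pose proof (path_prob_pos a q i j).
    pose proof (inv_denoms_pos a q i j). rewrite Hbal in *. nra. }
  pose proof (inv_denoms_reflect_le i j q Hij Hj 0 0) as C. rewrite !Nat.add_0_r in C. apply C.
  unfold q, u. cbn in E |- *. destruct (first_tie 1 t) eqn:F; cbn in E; [|discriminate].
  injection E as <-. cbn. split; [lia|]. apply first_tie_stays_nonneg; auto; lia.
Qed.

Definition signed_weight i j tgt (u : list bool) : R :=
  if Nat.eqb (count_b true u) tgt then path_prob a i j u * first_sign u else 0.

(* Pair each path with its tie reflection; a path that never ties again
   cannot start with an X-step, since it ends with X no further ahead. *)
Lemma signed_weight_tie_pair_nonpos i j tgt u : (j <= i)%nat -> (1 <= j)%nat ->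
  (2 * tgt <= length u)%nat ->
  signed_weight i j tgt u + signed_weight i j tgt (tie_reflect u) <= 0.
Proof.
  intros Hij Hj Hm. unfold signed_weight. rewrite count_true_tie_reflect.
  destruct (Nat.eqb_spec (count_b true u) tgt) as [Hu|]; [|lra].
  destruct (first_tie 0 u) as [k|] eqn:E.
  - rewrite (first_sign_tie_reflect _ _ E).
    destruct u as [|[] t]; [cbn; lra| |]; cbn [first_sign step_sign IZR].
    + pose proof (path_prob_le_tie_reflect i j t k Hij Hj E). lra.
    + assert (E' : first_tie 0 (tie_reflect (false :: t)) = Some k).
      { pose proof (first_tie_negb _ _ _ E (skipn k (false :: t))) as F. cbn in F.
        unfold tie_reflect at 1. now rewrite E. }
      assert (Ht' : exists t', tie_reflect (false :: t) = true :: t').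
      { pose proof (first_tie_bounds _ _ _ E). unfold tie_reflect. rewrite E.
        destruct k; [lia|]. cbn. eauto. }
      destruct Ht' as [t' Ht']. rewrite Ht' in E'.
      pose proof (path_prob_le_tie_reflect i j t' k Hij Hj E') as C.
      rewrite <- Ht', tie_reflect_invol in C. lra.
  - unfold tie_reflect. rewrite E. destruct u as [|[] t]; [cbn; lra| |].
    + exfalso. pose proof (count_true_add_false (true :: t)) as Hlen.
      assert (Hd : displacement (true :: t) = (2 * Z.of_nat tgt - Z.of_nat (length (true :: t)))%Z)
        by (unfold displacement; lia).
      rewrite displacement_cons in Hd. cbn [length] in Hm, Hd. unfold step_sign in Hd.
      destruct (first_tie_exists t 1) as [k Hk]; [lia|lia|].
      cbn in E. rewrite Hk in E. discriminate.
    + pose proof (path_prob_pos a (false :: t) i j). cbn [first_sign step_sign IZR]. lra.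
Qed.

Lemma signed_weight_lead_nonpos i j m tgt : (j <= i)%nat -> (1 <= j)%nat ->
  (2 * tgt <= m)%nat -> lsum (all_paths m) (signed_weight i j tgt) <= 0.
Proof.
  intros Hij Hj Hm.
  assert (Hpair : lsum (all_paths m)
            (fun u => signed_weight i j tgt u + signed_weight i j tgt (tie_reflect u)) <= 0).
  { apply lsum_nonpos. intros u Hu. apply In_all_paths in Hu.
    apply signed_weight_tie_pair_nonpos; lia. }
  rewrite lsum_plus, <- (lsum_all_paths_invol m tie_reflect) in Hpair
    by auto using tie_reflect_invol, length_tie_reflect.
  lra.
Qed.

Lemma signed_weight_trail_nonneg i j m tgt : (i <= j)%nat -> (1 <= i)%nat ->
  (m <= 2 * tgt)%nat -> 0 <= lsum (all_paths m) (signed_weight i j tgt).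
Proof.
  intros Hij Hi Hm. destruct (Nat.le_gt_cases tgt m) as [Htm|Htm].
  - rewrite lsum_all_paths_negb.
    rewrite (lsum_ext _ _ (fun u => -1 * signed_weight j i (m - tgt) u)).
    + rewrite lsum_scal.
      assert (lsum (all_paths m) (signed_weight j i (m - tgt)) <= 0)
        by (apply signed_weight_lead_nonpos; lia).
      lra.
    + intros u Hu. apply In_all_paths in Hu. pose proof (count_true_add_false u).
      unfold signed_weight. rewrite count_true_negb, path_prob_negb.
      destruct (Nat.eqb_spec (count_b false u) tgt);
        destruct (Nat.eqb_spec (count_b true u) (m - tgt)); try lia; [|ring].
      destruct u as [|b t]; cbn [map first_sign]; [ring|].
      rewrite step_sign_negb, opp_IZR. ring.
  - apply lsum_nonneg. intros u Hu. apply In_all_paths in Hu. pose proof (count_true_add_false u).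
    unfold signed_weight. destruct (Nat.eqb_spec (count_b true u) tgt); [lia|lra].
Qed.

End Reflection.

Fixpoint stopped_walk (T c : Z) (q : list bool) : Z :=
  if Z.leb T (Z.abs c) then c
  else match q with nil => c | b :: t => stopped_walk T (c + step_sign b) t end.

Lemma stopped_walk_snoc T q x : forall c, stopped_walk T c (q ++ [x]) =
  (if Z.leb T (Z.abs (stopped_walk T c q)) then stopped_walk T c q
   else stopped_walk T c q + step_sign x)%Z.
Proof.
  induction q as [|b q IH]; intros c; cbn.
  - destruct (Z.leb T (Z.abs c)) eqn:E; [now rewrite E|].
    destruct (Z.leb T (Z.abs (c + step_sign x))); now rewrite ?E.
  - destruct (Z.leb T (Z.abs c)) eqn:E; [now rewrite E|]. apply IH.
Qed.

Lemma stopped_walk_unstopped T q : forall c, (Z.abs (stopped_walk T c q) < T)%Z ->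
  stopped_walk T c q = (c + displacement q)%Z.
Proof.
  induction q as [|b q IH]; intros c H; cbn [stopped_walk] in *.
  - destruct (Z.leb T (Z.abs c)); rewrite displacement_nil; lia.
  - destruct (Z.leb_spec T (Z.abs c)); [lia|]. rewrite IH by auto. rewrite displacement_cons; lia.
Qed.

Lemma stopped_walk_hit T q : forall c k, (T <= Z.abs (c + displacement (firstn k q)))%Z ->
  (T <= Z.abs (stopped_walk T c q))%Z.
Proof.
  induction q as [|b q IH]; intros c k H; cbn.
  - rewrite firstn_nil, displacement_nil in H. destruct (Z.leb T (Z.abs c)); lia.
  - destruct (Z.leb_spec T (Z.abs c)); auto.
    destruct k as [|k]; cbn in H; rewrite ?displacement_nil, ?displacement_cons in H; [lia|].
    apply (IH _ k). now rewrite <- Z.add_assoc.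
Qed.

Section StoppedWalk.

Variable a : R.
Hypothesis a_ge1 : 1 <= a.
Variables (c : nat) (T : Z).

(* With [c = n - 1] these are the integrands of P[BINGO], E[S_r^2; BINGO] and
   E[S_r (S_{r+1} - S_r); BINGO], S_r the stopped walk while it runs. *)
Definition bingo_weight (p : list bool) : R :=
  if Nat.eqb (count_b true p) c then path_prob a 1 1 p else 0.

Definition stopped_sq_weight (r : nat) (p : list bool) : R :=
  if Nat.eqb (count_b true p) c
  then path_prob a 1 1 p * IZR (stopped_walk T 0 (firstn r p)) ^ 2 else 0.

Definition running_walk (q : list bool) : R :=
  if Z.leb T (Z.abs (stopped_walk T 0 q)) then 0 else IZR (stopped_walk T 0 q).

Definition cross_term (r : nat) (p : list bool) : R :=
  if Nat.eqb (count_b true p) c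
  then path_prob a 1 1 p * running_walk (firstn r p) * first_sign (skipn r p) else 0.

Lemma bingo_weight_nonneg p : 0 <= bingo_weight p.
Proof. unfold bingo_weight. destruct (Nat.eqb _ _); [apply Rlt_le, path_prob_pos|lra]. Qed.

Lemma bingo_mass_pos : 0 < lsum (all_paths (2 * c)) bingo_weight.
Proof.
  set (p0 := repeat true c ++ repeat false c).
  assert (Hcount : count_b true p0 = c).
  { unfold p0. rewrite count_b_app.
    enough (Hrep : forall b k, count_b true (repeat b k) = if b then k else 0%nat)
      by (rewrite !Hrep; lia).
    intros b k. induction k as [|k IH]; [now destruct b|].
    cbn [repeat]. rewrite count_true_cons, IH. now destruct b. }
  apply (Rlt_le_trans _ (bingo_weight p0)).
  - unfold bingo_weight. rewrite Hcount, Nat.eqb_refl. apply path_prob_pos.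
  - apply lsum_elt_le; [intros; apply bingo_weight_nonneg|].
    apply In_all_paths. unfold p0. rewrite length_app, !repeat_length. lia.
Qed.

Definition signed_continuation (q u : list bool) : R :=
  if Nat.eqb (count_b true q + count_b true u) c
  then path_prob a (1 + count_b true q) (1 + count_b false q) u * first_sign u else 0.

Lemma cross_term_prefix q u : cross_term (length q) (q ++ u) =
  path_prob a 1 1 q * running_walk q * signed_continuation q u.
Proof.
  unfold cross_term, signed_continuation. rewrite firstn_app, skipn_app, Nat.sub_diag, firstn_all, skipn_all,
    firstn_O, app_nil_r, count_b_app. cbn [app skipn].
  destruct (Nat.eqb _ c); [|ring]. rewrite path_prob_app. ring.
Qed.

Lemma displacement_mul_drift_nonpos q m : (length q + m = 2 * c)%nat ->
  (count_b true q <= c)%nat ->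
  IZR (displacement q) *
  lsum (all_paths m) (signed_weight a (1 + count_b true q) (1 + count_b false q) (c - count_b true q))
  <= 0.
Proof.
  intros Hlen Hc. pose proof (count_true_add_false q) as Hq.
  set (drift := lsum _ _).
  destruct (Z.lt_total (displacement q) 0) as [Hd|[Hd|Hd]].
  - assert (0 <= drift) by (apply signed_weight_trail_nonneg; auto; unfold displacement in Hd; lia).
    apply IZR_lt in Hd. nra.
  - rewrite Hd. lra.
  - assert (drift <= 0) by (apply signed_weight_lead_nonpos; auto; unfold displacement in Hd; lia).
    apply IZR_lt in Hd. nra.
Qed.

Lemma running_walk_mul_drift_nonpos q m : (length q + m = 2 * c)%nat ->
  running_walk q * lsum (all_paths m) (signed_continuation q) <= 0.
Proof.
  intros Hlen. destruct (Nat.le_gt_cases (count_b true q) c) as [Hc|Hc].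
  - rewrite (lsum_ext _ _ (signed_weight a (1 + count_b true q) (1 + count_b false q)
                                          (c - count_b true q))).
    + unfold running_walk. destruct (Z.leb_spec T (Z.abs (stopped_walk T 0 q))); [lra|].
      rewrite stopped_walk_unstopped by lia. now apply displacement_mul_drift_nonpos.
    + intros u _. unfold signed_weight, signed_continuation.
      destruct (Nat.eqb_spec (count_b true q + count_b true u) c);
        destruct (Nat.eqb_spec (count_b true u) (c - count_b true q)); auto; lia.
  - rewrite lsum_eq0; [lra|]. intros u _. unfold signed_continuation.
    destruct (Nat.eqb_spec (count_b true q + count_b true u) c); [lia|auto].
Qed.

(* Conditioned on BINGO, the stopped walk is pulled towards the diagonal. *)
Lemma cross_term_nonpos r m : (r + m = 2 * c)%nat ->
  lsum (all_paths (r + m)) (cross_term r) <= 0.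
Proof.
  intros Hrm. rewrite lsum_all_paths_add. apply lsum_nonpos. intros q Hq.
  apply In_all_paths in Hq. subst r.
  rewrite (lsum_ext _ _ (fun u => path_prob a 1 1 q * (running_walk q * signed_continuation q u)))
    by (intros u _; rewrite cross_term_prefix; ring).
  rewrite !lsum_scal. pose proof (path_prob_pos a q 1 1).
  pose proof (running_walk_mul_drift_nonpos q m Hrm). nra.
Qed.

Lemma stopped_sq_weight_S_le r p : (r < length p)%nat ->
  stopped_sq_weight (S r) p <= stopped_sq_weight r p + bingo_weight p + 2 * cross_term r p.
Proof.
  intros Hr. unfold stopped_sq_weight, bingo_weight, cross_term.
  destruct (Nat.eqb _ c); [|lra].
  destruct (skipn r p) as [|x t] eqn:Ht.
  { apply (f_equal (@length bool)) in Ht. rewrite length_skipn in Ht. cbn in Ht. lia. }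
  assert (Hfirst : firstn (S r) p = firstn r p ++ [x]).
  { rewrite <- (firstn_skipn r p) at 1. rewrite Ht, firstn_app, length_firstn.
    replace (S r - Nat.min r (length p))%nat with 1%nat by lia.
    now rewrite firstn_all2 by (rewrite length_firstn; lia). }
  rewrite Hfirst, stopped_walk_snoc. unfold running_walk. cbn [first_sign].
  pose proof (path_prob_pos a p 1 1).
  destruct (Z.leb T _); [lra|].
  rewrite plus_IZR. assert (IZR (step_sign x) ^ 2 = 1) by (destruct x; cbn; ring). nra.
Qed.

Lemma stopped_sq_step r :
  lsum (all_paths (2 * c)) (stopped_sq_weight (S r)) <=
  lsum (all_paths (2 * c)) (stopped_sq_weight r) + lsum (all_paths (2 * c)) bingo_weight.
Proof.
  rewrite <- lsum_plus. destruct (Nat.le_gt_cases (2 * c) r) as [Hr|Hr].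
  - apply lsum_le. intros p Hp. apply In_all_paths in Hp.
    unfold stopped_sq_weight. rewrite !firstn_all2 by lia.
    pose proof (bingo_weight_nonneg p). destruct (Nat.eqb _ c); lra.
  - replace (2 * c)%nat with (r + (2 * c - r))%nat by lia.
    pose proof (cross_term_nonpos r (2 * c - r) ltac:(lia)).
    assert (lsum (all_paths (r + (2 * c - r))) (stopped_sq_weight (S r)) <=
            lsum (all_paths (r + (2 * c - r)))
              (fun p => stopped_sq_weight r p + bingo_weight p + 2 * cross_term r p)).
    { apply lsum_le. intros p Hp. apply In_all_paths in Hp.
      apply stopped_sq_weight_S_le. lia. }
    rewrite !lsum_plus, lsum_scal in *. lra.
Qed.

Lemma stopped_sq_linear r :
  lsum (all_paths (2 * c)) (stopped_sq_weight r) <= INR r * lsum (all_paths (2 * c)) bingo_weight.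
Proof.
  induction r as [|r IH].
  - rewrite lsum_eq0; [cbn; lra|]. intros p _. unfold stopped_sq_weight.
    destruct (Nat.eqb _ c); [|auto]. cbn. destruct (Z.leb _ _); ring.
  - pose proof (stopped_sq_step r). rewrite S_INR. lra.
Qed.

Definition hit_weight (r : nat) (p : list bool) : R :=
  if Z.leb T (Z.abs (stopped_walk T 0 (firstn r p))) then bingo_weight p else 0.

(* Chebyshev's inequality for the stopped walk, which sits at height [>= T]
   once it has hit. *)
Lemma hit_mass_bound r : (1 <= T)%Z ->
  lsum (all_paths (2 * c)) (hit_weight r) * IZR T ^ 2 <= INR r * lsum (all_paths (2 * c)) bingo_weight.
Proof.
  intros HT. eapply Rle_trans; [|apply stopped_sq_linear].
  rewrite Rmult_comm, <- lsum_scal. apply lsum_le. intros p _.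
  unfold hit_weight, stopped_sq_weight, bingo_weight.
  set (z := IZR (stopped_walk T 0 (firstn r p))).
  pose proof (path_prob_pos a p 1 1). pose proof (pow2_ge_0 z).
  destruct (Z.leb_spec T (Z.abs (stopped_walk T 0 (firstn r p)))); destruct (Nat.eqb _ c); try nra.
  assert (IZR T ^ 2 <= z ^ 2).
  { rewrite <- (pow2_abs z). unfold z. rewrite <- abs_IZR.
    apply pow_incr. split; apply IZR_le; lia. }
  nra.
Qed.

End StoppedWalk.

Lemma probE_bingo a n : probE a n (bingo n) = lsum (all_paths (2 * (n - 1))) (bingo_weight a (n - 1)).
Proof.
  unfold probE. replace (2 * n - 2)%nat with (2 * (n - 1))%nat by lia.
  apply lsum_ext. intros p _. unfold bingo_weight, bingo, weight.
  destruct (excluded_middle_informative _); destruct (Nat.eqb_spec (count_b true p) (n - 1));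
    easy.
Qed.

Lemma probE_bingo_hit_le a n T r (E : list bool -> Prop) :
  (forall p, bingo n p -> E p -> (T <= Z.abs (stopped_walk T 0 (firstn r p)))%Z) ->
  probE a n (fun p => bingo n p /\ E p) <= lsum (all_paths (2 * (n - 1))) (hit_weight a (n - 1) T r).
Proof.
  intros Hhit. unfold probE. replace (2 * n - 2)%nat with (2 * (n - 1))%nat by lia.
  apply lsum_le. intros p _. unfold hit_weight.
  destruct (excluded_middle_informative _) as [[Hb HE]|].
  - rewrite (proj2 (Z.leb_le _ _) (Hhit p Hb HE)). unfold bingo_weight, weight.
    unfold bingo in Hb. rewrite Hb, Nat.eqb_refl. lra.
  - destruct (Z.leb _ _); [apply bingo_weight_nonneg|lra].
Qed.

Lemma condPr_hit_bound a n T r (E : list bool -> Prop) : 1 <= a -> (1 <= T)%Z ->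
  (forall p, bingo n p -> E p -> (T <= Z.abs (stopped_walk T 0 (firstn r p)))%Z) ->
  condPr a n E * IZR T ^ 2 <= INR r.
Proof.
  intros Ha HT Hhit. unfold condPr. rewrite probE_bingo.
  pose proof (bingo_mass_pos a (n - 1)) as Hmass.
  pose proof (hit_mass_bound a Ha (n - 1) T r HT) as Hcheb.
  pose proof (probE_bingo_hit_le a n T r E Hhit) as Hnum.
  set (W := lsum _ (bingo_weight a (n - 1))) in *.
  assert (0 <= IZR T ^ 2) by apply pow2_ge_0.
  apply (Rmult_le_reg_r W); [exact Hmass|].
  replace (probE a n (fun p => bingo n p /\ E p) / W * IZR T ^ 2 * W)
    with (probE a n (fun p => bingo n p /\ E p) * IZR T ^ 2) by (field; lra).
  nra.
Qed.

Lemma DeltaXY_hit_stopped_walk T p K r : (T <= Z.abs (DeltaXY p K))%Z -> (K <= r)%nat ->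
  (T <= Z.abs (stopped_walk T 0 (firstn r p)))%Z.
Proof.
  intros HK Hr. apply (stopped_walk_hit T _ 0 (K - 2)).
  rewrite firstn_firstn, Nat.min_l by lia. exact HK.
Qed.

Lemma up_le_of_scaled_gt eps s d : 0 < s -> Rabs (IZR d / s) > eps -> (up (eps * s) <= Z.abs d)%Z.
Proof.
  intros Hs Hd. unfold Rdiv in Hd.
  rewrite Rabs_mult, Rabs_inv, (Rabs_right s), <- abs_IZR in Hd by lra.
  assert (Hlt : eps * s < IZR (Z.abs d)).
  { apply (Rmult_lt_reg_r (/ s)); [now apply Rinv_0_lt_compat|].
    rewrite Rmult_assoc, Rinv_r, Rmult_1_r by lra. lra. }
  destruct (archimed (eps * s)) as [_ Hup].
  assert (Hz : IZR (up (eps * s) - 1) < IZR (Z.abs d)) by (rewrite minus_IZR; lra).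
  apply lt_IZR in Hz. lia.
Qed.

Lemma Int_part_le x y : x <= y -> (Int_part x <= Int_part y)%Z.
Proof.
  intros Hxy. destruct (base_Int_part x) as [Hx _], (base_Int_part y) as [_ Hy].
  assert (Hz : IZR (Int_part x) < IZR (Int_part y + 1)) by (rewrite plus_IZR; lra).
  apply lt_IZR in Hz. lia.
Qed.

Lemma Int_part_nonneg x : 0 <= x -> (0 <= Int_part x)%Z.
Proof.
  intros Hx. replace 0%Z with (Int_part 0) by (symmetry; apply Int_part_spec; lra).
  now apply Int_part_le.
Qed.

Lemma floor_nat_le x y : 0 <= x -> x <= y ->
  (Z.to_nat (Int_part x) <= Z.to_nat (Int_part y))%nat.
Proof.
  intros Hx Hxy. apply Z2Nat.inj_le; [apply Int_part_nonneg; lra ..|]. now apply Int_part_le.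
Qed.

Lemma INR_floor_le x : 0 <= x -> INR (Z.to_nat (Int_part x)) <= x.
Proof.
  intros Hx. rewrite INR_IZR_INZ, Z2Nat.id by now apply Int_part_nonneg. apply base_Int_part.
Qed.

Theorem mainTheorem19 :
  forall (alpha : R), 1 < alpha ->
  forall (eps eta : R), 0 < eps -> 0 < eta ->
  exists delta : R, 0 < delta /\ delta <= 1 /\
    forall n : nat, (1 <= n)%nat ->
      condPr alpha n
        (fun p => exists t : R, 0 <= t <= delta /\
           Rabs (IZR (DeltaXY p (Z.to_nat (Int_part (2 * INR n * t)))) / sqrt (INR n)) > eps)
      <= eta.
Proof.
  intros alpha Halpha eps eta Heps Heta.
  pose proof (pow_lt eps 2 Heps) as Heps2.
  set (delta := Rmin 1 (eta * eps ^ 2 / 2)).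
  assert (Hdelta : 0 < delta) by (apply Rmin_glb_lt; nra).
  exists delta. split; [exact Hdelta|split; [apply Rmin_l|]]. intros n Hn.
  assert (Hn0 : 0 < INR n) by (apply lt_0_INR; lia).
  assert (Hsqrt : 0 < sqrt (INR n)) by now apply sqrt_lt_R0.
  set (T := up (eps * sqrt (INR n))). set (r := Z.to_nat (Int_part (2 * INR n * delta))).
  destruct (archimed (eps * sqrt (INR n))) as [HT _]. fold T in HT.
  assert (HT1 : (1 <= T)%Z) by (enough (0 < T)%Z by lia; apply lt_IZR; nra).
  assert (HT2 : eps ^ 2 * INR n <= IZR T ^ 2).
  { replace (eps ^ 2 * INR n) with ((eps * sqrt (INR n)) ^ 2)
      by (rewrite Rpow_mult_distr, pow2_sqrt; lra).
    apply pow_incr. nra. }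
  assert (Hr : INR r <= 2 * INR n * delta) by (apply INR_floor_le; nra).
  assert (Hd2 : delta <= eta * eps ^ 2 / 2) by apply Rmin_r.
  apply (Rmult_le_reg_r (IZR T ^ 2)); [nra|].
  apply (Rle_trans _ (INR r)); [|nra].
  apply condPr_hit_bound; [lra|exact HT1|]. intros p _ [t [Ht Hexc]].
  apply (DeltaXY_hit_stopped_walk _ _ _ _ (up_le_of_scaled_gt _ _ _ Hsqrt Hexc)).
  apply floor_nat_le; nra.
Qed.
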